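(* Let $\mathcal{A}$ be an $[n_a,k_a]_q$ cyclic code with minimum Hamming distance $d_a$ and let $\mathcal{B}$ be an $[n_b,k_b]_q$ cyclic code with minimum Hamming distance $d_b$, where $\gcd(n_a,n_b)=1$. Let $\alpha$ be an element of order $n_a$ in $\mathbb{F}_{q^{s_a}}$ and $\beta$ an element of order $n_b$ in $\mathbb{F}_{q^{s_b}}$. Let $f_1,f_2,m_1,m_2,\delta,\nu$ be integers with $m_1\neq 0$, $m_2\neq 0$, $\gcd(n_a,m_1)=\gcd(n_b,m_2)=1$, $\delta\geq 2$ and $\nu>0$, such that $$\sum_{i=0}^{\infty} a(\alpha^{f_1+im_1+j})\cdot b(\beta^{f_2+im_2+j})\,X^i \equiv 0 \bmod X^{\delta-1}\quad \text{for all } j=0,1,\dots,\nu$$ holds for all codewords $a(X)\in\mathcal{A}$ and $b(X)\in\mathcal{B}$ (the power series being over $\mathbb{F}_{q^s}$ with $s=\mathrm{lcm}(s_a,s_b)$). Then $$d_a \geq \left\lceil \frac{\delta+\nu}{d_b}\right\rceil.$$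
   Context: A cyclic $[n,k]_q$ code is an ideal of $\mathbb{F}_q[X]/(X^n-1)$; codewords are identified with polynomials $c(X)=\sum_{i=0}^{n-1}c_iX^i$ of degree less than $n$, and $c(\gamma)$ denotes evaluation of this polynomial at $\gamma$ in an extension field of $\mathbb{F}_q$. *)

From HB Require Import structures.
From mathcomp Require Import all_boot all_order all_algebra all_field.
Set Implicit Arguments. Unset Strict Implicit. Unset Printing Implicit Defensive.
Import GRing.Theory.
Local Open Scope ring_scope.

(* A cyclic [n,k]_q code = an ideal of F[X]/(X^n - 1), i.e. an
   F-linear set of such polynomials closed under multiplication by X
   modulo X^n - 1. *)
Definition cyclic_code (F : fieldType) (n : nat) (C : pred {poly F}) : Prop :=
  [/\ C 0,
      (forall (c : F) (p q : {poly F}), C p -> C q -> C (c *: p + q)),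
      (forall p, C p -> (size p <= n)%N) &
      (forall p, C p -> C (('X * p) %% ('X^n - 1)))].

Definition hweight (F : fieldType) (p : {poly F}) : nat :=
  count (fun c => c != 0) p.

Definition hdist (F : fieldType) (p q : {poly F}) : nat := hweight (p - q).

(* d is the minimum Hamming distance of the code C (which thus has at least
   two distinct codewords). *)
Definition min_distance (F : fieldType) (C : pred {poly F}) (d : nat) : Prop :=
  (exists p q, [/\ C p, C q, p != q & hdist p q = d]) /\
  (forall p q, C p -> C q -> p != q -> (d <= hdist p q)%N).

Definition peval (F : fieldType) (L : fieldExtType F) (p : {poly F}) (g : L) : L :=
  (map_poly (in_alg L) p).[g].

Definition ceil_div (m d : nat) : nat := ((m + d.-1) %/ d)%N.

From HB Require Import structures.
From mathcomp Require Import all_boot all_order all_algebra all_field.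
From mathcomp Require Import zify ring.

(* Take codewords a, b of minimum weight with supports S_a, S_b.  The product
   a(alpha^(f1+i m1+j)) b(beta^(f2+i m2+j)) is a sum over the d_a d_b pairs
   (k, l) in S_a x S_b of c_kl z_kl^i y_kl^j with c_kl <> 0,
   y_kl = alpha^k beta^l and z_kl = (alpha^m1)^k (beta^m2)^l; since n_a and n_b
   are coprime and m1, m2 are units modulo n_a, n_b, both y and z are injective
   on pairs.  A Vandermonde argument in two variables shows that such a sum
   cannot vanish for all i < delta - 1 and j <= nu unless it has more than
   delta - 1 + nu terms, i.e. d_a d_b >= delta + nu. *)
Set Implicit Arguments. Unset Strict Implicit. Unset Printing Implicit Defensive.
Import GRing.Theory.
Local Open Scope ring_scope.

Section PowerSums.

Variables (L : fieldType) (I : eqType).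

Lemma sum_horner_eq0 (r : seq I) (c y : I -> L) (g : {poly L}) :
  (forall j, (j < size g)%N -> \sum_(t <- r) c t * y t ^+ j = 0) ->
  \sum_(t <- r) c t * g.[y t] = 0.
Proof.
move=> Hpow; under eq_bigr => t _ do rewrite horner_coef mulr_sumr.
rewrite exchange_big /= big1 // => j _.
by under eq_bigr => t _ do rewrite mulrCA; rewrite -mulr_sumr Hpow ?mulr0.
Qed.

Lemma power_sums_eq0 (s : seq I) (c z : I -> L) :
  uniq s -> {in s &, injective z} ->
  (forall i, (i < size s)%N -> \sum_(t <- s) c t * z t ^+ i = 0) ->
  {in s, forall t, c t = 0}.
Proof.
move=> us iz Hpow t st.
set h := \prod_(x <- map z (rem t s)) ('X - x%:P).
have size_h : size h = size s.
  by rewrite size_prod_XsubC size_map size_rem // prednK //; case: (s) st.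
have := sum_horner_eq0 (r := s) (c := c) (y := z) (g := h); rewrite size_h => /(_ Hpow).
rewrite (big_rem t st) /= big1_seq ?addr0 => [/eqP|u /andP[_ ru]]; last first.
  by rewrite mulrC; apply/eqP; rewrite mulf_eq0 -rootE root_prod_XsubC map_f.
rewrite mulf_eq0 -rootE root_prod_XsubC orbC => /orP[/mapP[u ru ztu]|/eqP //].
by move: (ru); rewrite -(iz t u st (mem_rem ru) ztu) mem_rem_uniqF.
Qed.

Lemma size_gt_of_power_sums2 (r : seq I) (c y z : I -> L) (d nu : nat) :
  uniq r -> {in r &, injective y} -> {in r &, injective z} ->
  {in r, forall t, c t != 0} -> r != [::] -> (0 < d)%N ->
  (forall i j, (i < d)%N -> (j <= nu)%N ->
     \sum_(t <- r) c t * z t ^+ i * y t ^+ j = 0) ->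
  (d + nu < size r)%N.
Proof.
move=> ur iy iz c_neq0 r0 d0 Hpow; rewrite ltnNge; apply/negP => small_r.
have r_gt0 : (0 < size r)%N by case: (r) r0.
set k := (size r - d)%N.
have er := cat_take_drop k r; set s1 := take k r in er; set s2 := drop k r in er.
have ur12 : uniq (s1 ++ s2) by rewrite er.
have size_s2 : size s2 = (size r - k)%N by rewrite size_drop.
(* g has degree k <= nu and kills the terms over s1, leaving a square
   Vandermonde system in z over s2. *)
set g := \prod_(x <- map y s1) ('X - x%:P).
have sums_s2_eq0 : forall i, (i < size s2)%N ->
    \sum_(t <- s2) (c t * g.[y t]) * z t ^+ i = 0.
  move=> i lt_i; have : \sum_(t <- r) (c t * z t ^+ i) * g.[y t] = 0.
    apply: sum_horner_eq0 => j; rewrite size_prod_XsubC size_map size_takel ?leq_subr //.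
    by move=> lt_j; rewrite Hpow //; lia.
  rewrite -{1}er big_cat /= big1_seq ?add0r => [|t /andP[_ s1t]].
    by under eq_bigr => u _ do rewrite mulrAC.
  by apply/eqP; rewrite mulf_eq0 -rootE root_prod_XsubC map_f ?orbT.
have [t s2t] : exists t, t \in s2.
  have : (0 < size s2)%N by rewrite size_s2 /k; lia.
  by case: (s2) => [//|t s] _; exists t; rewrite mem_head.
have rt : t \in r by rewrite -er mem_cat s2t orbT.
have /eqP := power_sums_eq0 (s := s2) (drop_uniq k ur) (sub_in2 (@mem_drop k _ r) iz) sums_s2_eq0 s2t.
rewrite mulf_eq0 (negbTE (c_neq0 t rt)) -rootE root_prod_XsubC => /mapP[u s1u ytu].
have ru : u \in r by rewrite -er mem_cat s1u.
move: ur12; rewrite cat_uniq => /and3P[_ /hasPn/(_ t s2t)].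
by rewrite /= (iy t u rt ru ytu) s1u.
Qed.

End PowerSums.

Section RootsOfUnity.

Variable L : fieldType.

Lemma prim_root_inv n (z : L) : n.-primitive_root z^-1 = n.-primitive_root z.
Proof.
rewrite /primitive_root_of_unity; congr (_ && _); apply: eq_forallb => i.
by rewrite !unity_rootE exprVn invr_eq1.
Qed.

Lemma prim_root_exprz n (z : L) (m : int) :
  n.-primitive_root z -> coprime n `|m| -> n.-primitive_root (z ^ m).
Proof.
by case: m => k pz co /=; rewrite ?prim_root_inv prim_root_exp_coprime // coprime_sym.
Qed.

Lemma prim_roots_expr_injl (x w : L) (na nb k k' l l' : nat) :
  na.-primitive_root x -> nb.-primitive_root w -> coprime na nb ->
  (k < na)%N -> (k' < na)%N -> x ^+ k * w ^+ l = x ^+ k' * w ^+ l' -> k = k'.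
Proof.
move=> px pw co lt_k lt_k' /(congr1 (fun u => u ^+ nb)).
rewrite !exprMn -!exprM !(mulnC _ nb) !exprM (prim_expr_order pw) !expr1n !mulr1.
have pxnb : na.-primitive_root (x ^+ nb) by rewrite prim_root_exp_coprime // coprime_sym.
by move/eqP; rewrite (eq_prim_root_expr pxnb) !modn_small // => /eqP.
Qed.

Lemma allpairs_prim_roots_expr_inj (x w : L) (na nb : nat) (s1 s2 : seq nat) :
  na.-primitive_root x -> nb.-primitive_root w -> coprime na nb ->
  {in s1, forall k, k < na}%N -> {in s2, forall l, l < nb}%N ->
  {in [seq (k, l) | k <- s1, l <- s2] &, injective (fun t => x ^+ t.1 * w ^+ t.2)}.
Proof.
move=> px pw co s1na s2nb t t' /allpairsP[[k l] [/= s1k s2l ->]].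
move=> /allpairsP[[k' l'] [/= s1k' s2l' ->]] /= e.
have co' : coprime nb na by rewrite coprime_sym.
congr (_, _); first exact: prim_roots_expr_injl px pw co (s1na _ s1k) (s1na _ s1k') e.
apply: (prim_roots_expr_injl (l := k) (l' := k') pw px co' (s2nb _ s2l) (s2nb _ s2l')).
by rewrite mulrC e mulrC.
Qed.

End RootsOfUnity.

Section Support.

Variable F : fieldType.
Implicit Type a : {poly F}.

Definition supp a : seq nat := [seq k <- iota 0 (size a) | a`_k != 0].

Lemma supp_uniq a : uniq (supp a).
Proof. exact/filter_uniq/iota_uniq. Qed.

Lemma mem_supp a k : (k \in supp a) = (a`_k != 0).
Proof.
rewrite mem_filter mem_iota /= andbC; case: ltnP => // le_a_k.
by rewrite nth_default ?eqxx.
Qed.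

Lemma supp_lt_size a k : k \in supp a -> (k < size a)%N.
Proof. by rewrite mem_filter mem_iota => /and3P[]. Qed.

Lemma size_supp a : size (supp a) = hweight a.
Proof. by rewrite size_filter /hweight -[in RHS](mkseq_nth 0 a) count_map. Qed.

Lemma hweight_gt0 a : a != 0 -> (0 < hweight a)%N.
Proof.
move=> a0; rewrite -size_supp -has_predT; apply/hasP; exists (size a).-1 => //.
by rewrite mem_supp -lead_coefE lead_coef_eq0.
Qed.

Lemma peval_supp (L : fieldExtType F) a (x : L) :
  peval a x = \sum_(k <- supp a) (a`_k)%:A * x ^+ k.
Proof.
rewrite /peval horner_coef size_map_poly big_filter.
have -> : iota 0 (size a) = index_iota 0 (size a) by rewrite /index_iota subn0.
rewrite big_mkord [RHS]big_mkcond; apply: eq_bigr => k _.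
by rewrite coef_map /=; case: eqP => [->|]; rewrite ?scale0r ?mul0r.
Qed.

End Support.

Lemma cyclic_code_supp_lt (F : fieldType) (n : nat) (C : pred {poly F}) (a : {poly F}) :
  cyclic_code n C -> C a -> {in supp a, forall k, k < n}%N.
Proof. by case=> _ _ Csize _ Ca k /supp_lt_size/leq_trans; apply; apply: Csize. Qed.

Lemma peval_exprz_progression (F : fieldType) (L : fieldExtType F) (a : {poly F})
    (x : L) (f m : int) (i j : nat) :
  x != 0 ->
  peval a (x ^ (f + i%:Z * m + j%:Z)) =
  \sum_(k <- supp a) (a`_k)%:A * (x ^ f) ^+ k * ((x ^ m) ^+ k) ^+ i * (x ^+ k) ^+ j.
Proof.
move=> x0; rewrite peval_supp; apply: eq_bigr => k _; rewrite -!mulrA; congr (_ * _).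
rewrite !exprnP !exprz_exp -!expfzDr //; congr (_ ^ _); ring.
Qed.

Lemma ceil_div_leq (m d n : nat) : (0 < d)%N -> (m <= n * d)%N -> (ceil_div m d <= n)%N.
Proof. by move=> d0 le_m; rewrite /ceil_div -ltnS ltn_divLR //; lia. Qed.

Lemma min_distance_codeword (F : fieldType) (n d : nat) (C : pred {poly F}) :
  cyclic_code n C -> min_distance C d -> exists a, [/\ C a, a != 0 & hweight a = d].
Proof.
move=> [_ Clin _ _] [[p [q [Cp Cq pq <-]]] _].
exists (p - q); split; rewrite ?subr_eq0 //.
by have := Clin (-1) q p Cq Cp; rewrite scaleN1r addrC.
Qed.

Lemma peval_progression_mul (F : fieldType) (L : fieldExtType F) (a b : {poly F})
    (x w : L) (f1 f2 m1 m2 : int) (i j : nat) :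
  x != 0 -> w != 0 ->
  peval a (x ^ (f1 + i%:Z * m1 + j%:Z)) * peval b (w ^ (f2 + i%:Z * m2 + j%:Z)) =
  \sum_(t <- [seq (k, l) | k <- supp a, l <- supp b])
     (a`_t.1)%:A * (x ^ f1) ^+ t.1 * ((b`_t.2)%:A * (w ^ f2) ^+ t.2) *
     ((x ^ m1) ^+ t.1 * (w ^ m2) ^+ t.2) ^+ i * (x ^+ t.1 * w ^+ t.2) ^+ j.
Proof.
move=> x0 w0; rewrite !peval_exprz_progression // big_allpairs mulr_suml.
apply: eq_bigr => k _; rewrite mulr_sumr; apply: eq_bigr => l _ /=.
rewrite !exprMn; ring.
Qed.

Theorem theorem5
  (F : finFieldType) (L : fieldExtType F)
  (na nb da db : nat) (A B : pred {poly F})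
  (alpha beta : L) (f1 f2 m1 m2 : int) (delta nu : nat) :
  cyclic_code na A -> min_distance A da ->
  cyclic_code nb B -> min_distance B db ->
  coprime na nb ->
  na.-primitive_root alpha -> nb.-primitive_root beta ->
  m1 != 0 -> m2 != 0 ->
  coprime na `|m1| -> coprime nb `|m2| ->
  (2 <= delta)%N -> (0 < nu)%N ->
  (forall a b, A a -> B b ->
     forall j : nat, (j <= nu)%N ->
     forall i : nat, (i < delta.-1)%N ->
       peval a (alpha ^ (f1 + i%:Z * m1 + j%:Z)) *
       peval b (beta ^ (f2 + i%:Z * m2 + j%:Z)) = 0) ->
  (ceil_div (delta + nu) db <= da)%N.
Proof.
move=> cA dA cB dB co pa pb _ _ co1 co2 delta_ge2 _ Hprod.
have [a [Aa a0 wa]] := min_distance_codeword cA dA.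
have [b [Bb b0 wb]] := min_distance_codeword cB dB.
have alpha0 : alpha != 0 by rewrite (prim_root_eq0 pa) -lt0n (prim_order_gt0 pa).
have beta0 : beta != 0 by rewrite (prim_root_eq0 pb) -lt0n (prim_order_gt0 pb).
have supp_a_lt := cyclic_code_supp_lt cA Aa.
have supp_b_lt := cyclic_code_supp_lt cB Bb.
set r := [seq (k, l) | k <- supp a, l <- supp b].
have : (delta.-1 + nu < size r)%N.
  apply: (size_gt_of_power_sums2
    (c := fun t => (a`_t.1)%:A * (alpha ^ f1) ^+ t.1 * ((b`_t.2)%:A * (beta ^ f2) ^+ t.2))
    (z := fun t => (alpha ^ m1) ^+ t.1 * (beta ^ m2) ^+ t.2)
    (y := fun t => alpha ^+ t.1 * beta ^+ t.2)).
  - by rewrite allpairs_uniq ?supp_uniq // => -[? ?] [? ?].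
  - exact: allpairs_prim_roots_expr_inj pa pb co supp_a_lt supp_b_lt.
  - by apply: allpairs_prim_roots_expr_inj co supp_a_lt supp_b_lt; apply: prim_root_exprz.
  - move=> t /allpairsP[[k l] [/= ak bl ->]] /=.
    by rewrite !mulf_neq0 ?expf_neq0 ?expfz_neq0 ?scaler_eq0 ?oner_eq0 ?orbF -?mem_supp.
  - by rewrite -size_eq0 size_allpairs !size_supp muln_eq0 negb_or -!lt0n !hweight_gt0.
  - by rewrite -subn1 subn_gt0.
  - by move=> i j lt_i le_j; rewrite -peval_progression_mul // Hprod.
rewrite size_allpairs !size_supp wa wb => lt_delta_nu.
by apply: ceil_div_leq; [rewrite -wb hweight_gt0 | lia].
Qed.
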